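(* Let ${\bf r}=(r_0,r_1,\dots)$ be a finitely supported sequence of nonnegative integers with $n=\sum_{d\ge1}r_d\ge1$ and $\ell=-\sum_{d\ge0}(d-1)r_d\ge1$, let $k\ge0$ be an integer, and let ${\bf S}\in V_{\bf r}$. Let $\mathcal{CF}_{{\bf r},k,{\bf S},1}$ be the set of forests in $\mathcal{CF}_{{\bf r},k,{\bf S}}$ in which the internal vertex with label $1$ lies in the first tree. Then $$|\mathcal{CF}_{{\bf r},k,{\bf S},1}|=1^{r_1}2^{r_2}3^{r_3}\cdots\prod_{i=1}^{n-1}\big(r_0+i(1+k)\big).$$
   Context: A plane tree is an unlabelled rooted tree in which the children of every vertex are linearly ordered; a plane forest is a finite linearly ordered sequence of plane trees (so it has a first tree). For vertices $u,v$ in a tree, $v$ is a descendant of $u$ if $u$ lies on the path from the root to $v$ (so $u$ is a descendant of itself). The degree $d_v$ is the number of children of $v$; $v$ is internal if $d_v\ge1$. $I(F)$ is the set of internal vertices of $F$. A plane forest has type ${\bf r}$ if it has exactly $r_i$ vertices of degree $i$ for all $i\ge0$. A labelled forest is a plane forest $F$ together with a bijection (labelling) $I(F)\to[n]$. An internal vertex $v$ of a labelled forest is proper if no internal descendant of $v$ has a smaller label than $v$, and improper otherwise. Fix colors $c_1,c_2,\dots$ and distinct special colors $c_1',c_2',\dots$. A proper $k$-coloring of a labelled forest assigns to each internal vertex $v$ a color, taken from $\{c_1,\dots,c_{d_v}\}$ if $v$ is proper and from $\{c_1,\dots,c_{d_v}\}\cup\{c_1',\dots,c_k'\}$ if $v$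 is improper. A $k$-colored labelled forest is a labelled forest together with a proper $k$-coloring; $\mathcal{CF}_{{\bf r},k}$ is the set of $k$-colored labelled forests whose underlying plane forest has type ${\bf r}$. $V_{\bf r}$ is the set of sequences ${\bf S}=(S_1,S_2,\dots)$ of pairwise disjoint subsets of $[n]$ with union $[n]$ and $|S_i|=r_i$ for all $i\ge1$. For ${\bf S}\in V_{\bf r}$, $\mathcal{CF}_{{\bf r},k,{\bf S}}$ is the set of forests in $\mathcal{CF}_{{\bf r},k}$ in which every internal vertex $v$ has its label in $S_{d_v}$. *)

From mathcomp Require Import all_boot.
From Stdlib Require List.
Set Implicit Arguments. Unset Strict Implicit. Unset Printing Implicit Defensive.

Inductive color := Cnorm of nat | Cspec of nat.

(* A plane tree whose internal vertices carry a label and a color.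
   [Leaf] is a vertex of degree 0 (unlabelled, uncolored);
   [Node l c cs] is a vertex with label l, color c and ordered children cs
   (well-formed only when cs is non-empty, see [tvalid]). *)
Inductive ctree := Leaf | Node of nat & color & list ctree.

Definition cforest := seq ctree.

Fixpoint tlabels (t : ctree) : seq nat :=
  match t with
  | Leaf => [::]
  | Node l _ cs => l :: flatten (map tlabels cs)
  end.

Fixpoint tdegs (t : ctree) : seq nat :=
  match t with
  | Leaf => [:: 0]
  | Node _ _ cs => size cs :: flatten (map tdegs cs)
  end.

Definition flabels (F : cforest) : seq nat := flatten (map tlabels F).
Definition fdegs (F : cforest) : seq nat := flatten (map tdegs F).

Definition proper_node (l : nat) (cs : seq ctree) : bool :=
  all (fun x => l <= x) (flatten (map tlabels cs)).

Definition color_ok (k d : nat) (isproper : bool) (c : color) : bool :=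
  match c with
  | Cnorm i => (1 <= i) && (i <= d)
  | Cspec j => (~~ isproper) && (1 <= j) && (j <= k)
  end.

Fixpoint tvalid (k : nat) (S : nat -> pred nat) (t : ctree) : bool :=
  match t with
  | Leaf => true
  | Node l c cs =>
      [&& 0 < size cs, color_ok k (size cs) (proper_node l cs) c,
          S (size cs) l & all (tvalid k S) cs]
  end.

Definition rr (r : seq nat) (i : nat) : nat := nth 0 r i.

Definition nint (r : seq nat) : nat := \sum_(1 <= d < size r) rr r d.

Definition in_V (r : seq nat) (S : nat -> pred nat) : Prop :=
  [/\ forall i j x, 1 <= i -> 1 <= j -> i != j -> S i x -> S j x -> False,
      forall x, (1 <= x <= nint r) <-> (exists2 i, 1 <= i & S i x)
    & forall i, 1 <= i -> count (S i) (iota 1 (nint r)) = rr r i].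

Definition in_CF (r : seq nat) (k : nat) (S : nat -> pred nat) (F : cforest) : Prop :=
  [/\ forall i, count_mem i (fdegs F) = rr r i,
      perm_eq (flabels F) (iota 1 (nint r))
    & all (tvalid k S) F].

Definition in_CF1 (r : seq nat) (k : nat) (S : nat -> pred nat) (F : cforest) : Prop :=
  in_CF r k S F /\
  match F with t :: _ => 1 \in tlabels t | [::] => False end.

Definition has_card (P : cforest -> Prop) (N : nat) : Prop :=
  exists L : seq cforest,
    [/\ List.NoDup L, (forall F, List.In F L <-> P F) & size L = N].

(* Count the forests with [l] trees, label set [L], label [x] carried by a vertex of
   prescribed degree [del x], and the smallest label [m] in a given tree [j].  Replacing the
   root [a] of that tree by its [del a] subtrees is a bijection onto pairs (color of [a],
   smaller forest): if [a = m] the smaller forest is arbitrary; otherwise [a] is improper,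
   so it has [k] more colors, and [m] must lie in one of the [del a] new trees.  By
   induction on [L] the count is independent of [j] and equals
   [\prod_x del x * \prod_(1 <= i < |L|) (r0 + i (1 + k))] with [r0] the number of leaves:
   the recursion closes because the root weights add up to [r0 + (|L| - 1) (1 + k)].
   Label 1 is the smallest one, so the theorem is the case [j = 0]. *)

From HB Require Import structures.
From mathcomp Require Import all_boot zify.
From Stdlib Require List.
Set Implicit Arguments. Unset Strict Implicit. Unset Printing Implicit Defensive.

Definition card_eq (T : Type) (P : T -> Prop) (N : nat) : Prop :=
  exists L : seq T, [/\ List.NoDup L, (forall x, List.In x L <-> P x) & size L = N].

Section CardEq.

Variables T U : Type.
Implicit Types P Q : T -> Prop.

Lemma card_eq_ext P Q N : (forall x, P x <-> Q x) -> card_eq P N -> card_eq Q N.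
Proof. by move=> PQ [L [uL memL <-]]; exists L; split=> // x; rewrite memL. Qed.

Lemma card_eq1 P a : (forall x, P x <-> x = a) -> card_eq P 1.
Proof.
move=> Pa; exists [:: a]; split=> //= [|x]; first by constructor; [case | constructor].
by rewrite Pa; split=> [[->|] | ->]; [| | left].
Qed.

Lemma card_eq_inj_image P (f : T -> U) N :
  (forall x y, P x -> P y -> f x = f y -> x = y) -> card_eq P N ->
  card_eq (fun y => exists2 x, P x & y = f x) N.
Proof.
move=> f_inj [L [uL memL <-]]; exists (map f L); rewrite size_map; split=> //.
- apply: List.NoDup_map_NoDup_ForallPairs uL => x y /memL Px /memL Py; exact: f_inj.
- move=> y; rewrite List.in_map_iff; split=> [[x [<- /memL]] | [x /memL]]; by exists x.
Qed.

Lemma card_eq_union P Q N M :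
  (forall x, P x -> Q x -> False) -> card_eq P N -> card_eq Q M ->
  card_eq (fun x => P x \/ Q x) (N + M).
Proof.
move=> disjPQ [L [uL memL <-]] [L' [uL' memL' <-]]; exists (L ++ L'); split.
- by apply: List.NoDup_app => // x /memL Px /memL' Qx; exact: disjPQ Px Qx.
- by move=> x; rewrite List.in_app_iff memL memL'.
- by rewrite size_cat.
Qed.

Lemma card_eq_bigcup (I : eqType) (s : seq I) (P : I -> T -> Prop) (N : I -> nat) :
  uniq s -> (forall i j x, i \in s -> j \in s -> P i x -> P j x -> i = j) ->
  (forall i, i \in s -> card_eq (P i) (N i)) ->
  card_eq (fun x => exists2 i, i \in s & P i x) (\sum_(i <- s) N i).
Proof.
elim: s => [|a s IHs] /= => [_ _ _ | /andP [a_s us] disjP cardP].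
  by rewrite big_nil; exists [::]; split=> // [|x]; [constructor | split=> // -[]].
rewrite big_cons; apply: card_eq_ext (card_eq_union _ (cardP a _) (IHs _ _ _)).
- move=> x; split=> [[Pax | [i i_s Pix]] | [i]]; first by exists a; rewrite ?mem_head.
    by exists i; rewrite // inE i_s orbT.
  by rewrite inE => /predU1P [-> | i_s] Pix; [left | right; exists i].
- move=> x Pax [i i_s Pix]; suff ai : a = i by rewrite ai i_s in a_s.
  by apply: (disjP a i x); rewrite // inE ?eqxx ?i_s ?orbT.
- exact: mem_head.
- exact: us.
- by move=> i j x i_s j_s; apply: disjP; rewrite inE ?i_s ?j_s orbT.
- by move=> i i_s; apply: cardP; rewrite inE i_s orbT.
Qed.

End CardEq.

Lemma big_seq_fibers (R : Type) (idx : R) (op : Monoid.com_law idx) (s L : seq nat)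
    (f : nat -> nat) (F : nat -> R) :
  uniq s -> {in L, forall x, f x \in s} ->
  \big[op/idx]_(x <- L) F (f x) = \big[op/idx]_(d <- s) \big[op/idx]_(x <- L | f x == d) F d.
Proof.
move=> us fL.
rewrite [RHS](eq_bigr (fun d => \big[op/idx]_(x <- L) (if f x == d then F d else idx))) => [|d _].
  rewrite exchange_big /=; apply: eq_big_seq => x xL.
rewrite -big_mkcond -big_filter (eq_filter (a2 := pred1 (f x))) => [|d]; last exact: eq_sym.
  by rewrite filter_pred1_uniq ?fL // big_seq1.
exact: big_mkcond.
Qed.

Lemma flabels_cat F G : flabels (F ++ G) = flabels F ++ flabels G.
Proof. by rewrite /flabels map_cat flatten_cat. Qed.

Lemma flabels_cons t F : flabels (t :: F) = tlabels t ++ flabels F.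
Proof. by []. Qed.

Lemma flabels_nthP x F :
  reflect (exists2 t, t < size F & x \in tlabels (nth Leaf F t)) (x \in flabels F).
Proof.
elim: F => [|u F IHF]; first by constructor=> -[].
rewrite flabels_cons mem_cat; apply: (iffP orP) => [[x_u | /IHF [t t_F x_t]] | [[|t] /= t_F x_t]].
- by exists 0.
- by exists t.+1.
- by left.
- by right; apply/IHF; exists t.
Qed.

Lemma flabels_nth_uniq x F t t' :
  uniq (flabels F) -> t < size F -> t' < size F ->
  x \in tlabels (nth Leaf F t) -> x \in tlabels (nth Leaf F t') -> t = t'.
Proof.
elim: F t t' => [|u F IHF] [|t] [|t'] //=;
  rewrite flabels_cons cat_uniq => /and3P [_ u'F uF] t_F t'_F x_t x_t'.
- by case/hasP: u'F; exists x => //; apply/flabels_nthP; exists t'.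
- by case/hasP: u'F; exists x => //; apply/flabels_nthP; exists t.
- by rewrite (IHF t t').
Qed.

Lemma flabels_nseq_Leaf F : flabels F = [::] -> F = nseq (size F) Leaf.
Proof. by elim: F => [|[|a c cs] F IHF] //= /IHF <-. Qed.

Lemma ctree_ind_all (P : ctree -> Prop) :
  P Leaf -> (forall l c cs, (forall t, List.In t cs -> P t) -> P (Node l c cs)) ->
  forall t, P t.
Proof.
move=> PLeaf PNode; fix IH 1 => -[|l c cs]; first exact: PLeaf.
apply: PNode; elim: cs => [|t cs IHcs] u /= => [[] | [<- | u_cs]]; [exact: IH | exact: IHcs].
Qed.

Lemma cforest_ind (P : cforest -> Prop) :
  P [::] -> (forall F, P F -> P (Leaf :: F)) ->
  (forall l c cs F, P cs -> P F -> P (Node l c cs :: F)) -> forall F, P F.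
Proof.
move=> Pnil PLeaf PNode.
suff cons_t t F : P F -> P (t :: F) by elim=> // t F /cons_t.
elim/ctree_ind_all: t F => [|l c cs IHcs] F PF; first exact: PLeaf.
apply: PNode => //; elim: cs IHcs => // t cs IH IHt.
by apply: (IHt); [left | apply: IH => u u_cs; apply: IHt; right].
Qed.

Lemma fdegs_Node l c cs F : fdegs (Node l c cs :: F) = size cs :: fdegs cs ++ fdegs F.
Proof. by []. Qed.

Lemma sumn_fdegs F : sumn (fdegs F) + size F = size (fdegs F).
Proof.
elim/cforest_ind: F => [//|F IHF | l c cs F IHcs IHF].
  by rewrite /fdegs /= -/(fdegs F) -IHF; lia.
by rewrite fdegs_Node /= sumn_cat size_cat -IHcs -IHF; lia.
Qed.


Lemma sum_count_fdegs b F :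
  all (fun d => d < b) (fdegs F) ->
  \sum_(0 <= d < b) count_mem d (fdegs F) = \sum_(0 <= d < b) d * count_mem d (fdegs F) + size F.
Proof.
move=> fdegs_b; have in_b : {in fdegs F, forall x, id x \in index_iota 0 b}.
  by move=> x /(allP fdegs_b) x_b; rewrite mem_index_iota.
have us : uniq (index_iota 0 b) by exact: iota_uniq.
have -> : \sum_(0 <= d < b) count_mem d (fdegs F) = size (fdegs F).
  rewrite -sum1_size (big_seq_fibers _ (fun=> 1) us in_b).
  by apply: eq_bigr => d _; rewrite sum1_count; apply: eq_count => x; rewrite /= eq_sym.
have -> : \sum_(0 <= d < b) d * count_mem d (fdegs F) = sumn (fdegs F).
  rewrite sumnE (big_seq_fibers _ id us in_b).
  by apply: eq_bigr => d _; rewrite big_const_seq iter_addn_0.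
by rewrite sumn_fdegs.
Qed.

Definition graft j a c d (F : cforest) : cforest :=
  take j F ++ Node a c (take d (drop j F)) :: drop (j + d) F.

Definition subtrees (t : ctree) : cforest := if t is Node _ _ cs then cs else [::].

Definition ungraft j (F : cforest) : cforest :=
  take j F ++ subtrees (nth Leaf F j) ++ drop j.+1 F.

Lemma graft_cat a c cs F G :
  graft (size F) a c (size cs) (F ++ cs ++ G) = F ++ Node a c cs :: G.
Proof.
rewrite /graft take_size_cat // drop_size_cat // take_size_cat //.
by rewrite addnC -drop_drop !drop_size_cat.
Qed.

Lemma ungraft_cat a c cs F G : ungraft (size F) (F ++ Node a c cs :: G) = F ++ cs ++ G.
Proof.
rewrite /ungraft take_size_cat // nth_cat ltnn subnn drop_cat ltnNge leqnSn /=.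
by rewrite subSnn /= drop0.
Qed.

Lemma ungraftK j F a c cs :
  j < size F -> nth Leaf F j = Node a c cs -> graft j a c (size cs) (ungraft j F) = F.
Proof.
move=> j_F Fj; have j_take : size (take j F) = j by rewrite size_takel // ltnW.
by rewrite /ungraft Fj -{1}j_take graft_cat -Fj -drop_nth // cat_take_drop.
Qed.

Lemma graftK j a c d F : j + d <= size F -> ungraft j (graft j a c d F) = F.
Proof.
move=> jd_F; have j_take : size (take j F) = j by rewrite size_takel //; lia.
by rewrite /graft -{1}j_take ungraft_cat addnC -drop_drop !cat_take_drop.
Qed.

Lemma size_graft j a c d F : j + d <= size F -> size (graft j a c d F) = (size F - d).+1.
Proof. by move=> jd_F; rewrite /graft size_cat /= size_take size_drop; case: ltnP; lia. Qed.

Lemma nth_graft j a c d F :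
  j <= size F -> nth Leaf (graft j a c d F) j = Node a c (take d (drop j F)).
Proof. by move=> j_F; rewrite /graft nth_cat size_takel // ltnn subnn. Qed.

Lemma graft_inj j a c d F G :
  j + d <= size F -> j + d <= size G -> graft j a c d F = graft j a c d G -> F = G.
Proof. by move=> jd_F jd_G FG; rewrite -(graftK a c jd_F) FG graftK. Qed.

Lemma perm_flabels_graft j a c d F : perm_eq (flabels (graft j a c d F)) (a :: flabels F).
Proof.
have -> : flabels F =
    flabels (take j F) ++ flabels (take d (drop j F)) ++ flabels (drop (j + d) F).
  by rewrite -!flabels_cat addnC -drop_drop !cat_take_drop.
by rewrite /graft flabels_cat flabels_cons perm_catCA /= perm_cons perm_catCA.
Qed.

Lemma all_tvalid_graft k S j a c d F :
  all (tvalid k S) (graft j a c d F) =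
  [&& 0 < size (take d (drop j F)),
      color_ok k (size (take d (drop j F))) (proper_node a (take d (drop j F))) c,
      S (size (take d (drop j F))) a & all (tvalid k S) F].
Proof.
have -> : all (tvalid k S) F = [&& all (tvalid k S) (take j F),
    all (tvalid k S) (take d (drop j F)) & all (tvalid k S) (drop (j + d) F)].
  by rewrite -!all_cat addnC -drop_drop !cat_take_drop.
rewrite /graft all_cat /=.
by case: (all _ (take j F)); case: (0 < _); case: (color_ok _ _ _ _); case: (S _ _);
  case: (all _ (take d _)); rewrite ?andbF.
Qed.

Definition color_to_sum (c : color) : nat + nat :=
  match c with Cnorm i => inl i | Cspec j => inr j end.
Definition sum_to_color (s : nat + nat) : color :=
  match s with inl i => Cnorm i | inr j => Cspec j end.
Lemma color_to_sumK : cancel color_to_sum sum_to_color. Proof. by case. Qed.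
HB.instance Definition _ := Equality.copy color (can_type color_to_sumK).


Section Forests.

Variables (k : nat) (S : nat -> pred nat) (del : nat -> nat).

Definition label_degree (L : seq nat) : Prop :=
  forall x, x \in L -> 0 < del x /\ forall i, 0 < i -> S i x = (i == del x).

Definition forest_on l L F : Prop :=
  [/\ size F = l, perm_eq (flabels F) L & all (tvalid k S) F].

Definition forest_on_at l L m j F : Prop :=
  forest_on l L F /\ m \in tlabels (nth Leaf F j).

Definition root_colors m a : seq color :=
  map Cnorm (iota 1 (del a)) ++ (if a == m then [::] else map Cspec (iota 1 k)).

(* Once the root [a] of the tree containing [m] is removed, its [del a]
   subtrees take its place; [m] lies in one of them unless [a = m]. *)
Definition root_fiber l L m j a F' : Prop :=
  if a == m then forest_on (l.-1 + del a) (rem a L) F'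
  else exists2 t, t \in index_iota j (j + del a) & forest_on_at (l.-1 + del a) (rem a L) m t F'.

Lemma mem_root_colors m a c :
  c \in root_colors m a =
  match c with
  | Cnorm p => 0 < p <= del a
  | Cspec p => [&& a != m, 0 < p & p <= k]
  end.
Proof.
have [Cnorm_inj Cspec_inj] : injective Cnorm /\ injective Cspec by split=> ? ? [].
rewrite /root_colors mem_cat; case: c => p.
  have /negbTE -> : Cnorm p \notin if a == m then [::] else map Cspec (iota 1 k).
    by case: (a == m) => //; apply/mapP => -[].
  by rewrite (mem_map Cnorm_inj) mem_iota orbF; lia.
have /negbTE -> : Cspec p \notin map Cnorm (iota 1 (del a)) by apply/mapP => -[].
by case: (a == m); rewrite //= (mem_map Cspec_inj) mem_iota; lia.
Qed.

Lemma uniq_root_colors m a : uniq (root_colors m a).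
Proof.
rewrite /root_colors cat_uniq map_inj_uniq ?iota_uniq; last by move=> ? ? [].
case: (a == m) => //=; rewrite map_inj_uniq ?iota_uniq; last by move=> ? ? [].
by rewrite andbT; apply/hasP => -[_ /mapP [? _ ->] /mapP [? _]].
Qed.

Lemma size_root_colors m a : size (root_colors m a) = del a + (if a == m then 0 else k).
Proof. by rewrite size_cat size_map size_iota; case: (a == m); rewrite ?size_map ?size_iota. Qed.

Lemma size_root_fiber l L m j a F' : root_fiber l L m j a F' -> size F' = l.-1 + del a.
Proof. by rewrite /root_fiber; case: (a == m) => [[]|[t _ [[]]]]. Qed.

Lemma count_fdegs F i :
  0 < i -> label_degree (flabels F) -> all (tvalid k S) F ->
  count_mem i (fdegs F) = count (fun x => del x == i) (flabels F).
Proof.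
move=> i_gt0; elim/cforest_ind: F => [//|F IHF | l c cs F IHcs IHF] degF.
  by move=> validF; rewrite /fdegs /= -/(fdegs F) eq_sym (gtn_eqF i_gt0) IHF.
move=> /andP [/and4P [cs_gt0 _ S_l valid_cs] validF].
have [_ S_del_l] := degF l (mem_head l (flabels cs ++ flabels F)).
have size_cs : size cs = del l by apply/eqP; rewrite -S_del_l.
rewrite fdegs_Node size_cs flabels_cons /= !count_cat IHcs ?IHF //.
- by move=> x x_F; apply: degF; rewrite flabels_cons mem_cat x_F orbT.
- move=> x x_cs; apply: degF.
  by rewrite flabels_cons mem_cat /= inE -/(flabels cs) x_cs orbT.
Qed.

Section RootDecomposition.

Variables (L : seq nat) (m : nat).
Hypotheses (degL : label_degree L) (mL : m \in L) (m_min : forall x, x \in L -> m <= x).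

Lemma forest_on_at_ungraft l j F :
  j < l -> forest_on_at l L m j F ->
  exists2 a, a \in L & exists2 c, c \in root_colors m a &
    exists2 F', root_fiber l L m j a F' & F = graft j a c (del a) F'.
Proof.
move=> j_l [[sizeF permF validF] m_j].
have j_F : j < size F by rewrite sizeF.
case Fj : (nth Leaf F j) m_j => [|a c cs] //= m_j.
have labF_L x : x \in tlabels (nth Leaf F j) -> x \in L.
  by move=> x_j; rewrite -(perm_mem permF); apply/flabels_nthP; exists j.
have aL : a \in L by apply: labF_L; rewrite Fj mem_head.
have csL x : x \in flabels cs -> x \in L.
  by move=> x_cs; apply: labF_L; rewrite Fj inE x_cs orbT.
have /= /and4P [cs_gt0 ok_c S_a _] : tvalid k S (Node a c cs).
  by rewrite -Fj; apply: (all_nthP Leaf validF).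
have [del_a S_del_a] := degL aL.
have size_cs : size cs = del a by apply/eqP; rewrite -S_del_a.
exists a => //; exists c.
  rewrite mem_root_colors; case: c ok_c {Fj} => p /=; rewrite ?size_cs // -andbA.
  case/and3P => improper_a -> ->; rewrite !andbT; apply: contra improper_a => /eqP am.
  by apply/allP => x x_cs; rewrite am; apply/m_min/csL.
exists (ungraft j F); last by rewrite -size_cs ungraftK.
have F'_on : forest_on (l.-1 + del a) (rem a L) (ungraft j F).
  have graftF : graft j a c (del a) (ungraft j F) = F by rewrite -size_cs ungraftK.
  split.
  - by rewrite /ungraft Fj !size_cat size_takel ?size_drop ?size_cs /=; lia.
  - rewrite -(perm_cons a); apply: perm_trans (perm_trans permF (perm_to_rem aL)).
    by have := perm_flabels_graft j a c (del a) (ungraft j F); rewrite graftF perm_sym.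
  - by move: validF; rewrite -{1}graftF all_tvalid_graft => /and4P [].
rewrite /root_fiber; case: eqVneq => [//|am].
have /flabels_nthP [u u_cs m_u] : m \in flabels cs.
  by move: m_j; rewrite inE => /predU1P [ma|//]; rewrite ma eqxx in am.
exists (j + u); first by rewrite mem_index_iota; lia.
split=> //; rewrite /ungraft Fj nth_cat size_takel ?(ltnW j_F) // ltnNge leq_addr /=.
by rewrite addKn nth_cat u_cs.
Qed.

Lemma graft_forest_on_at l j a c F' :
  j < l -> a \in L -> c \in root_colors m a -> root_fiber l L m j a F' ->
  forest_on_at l L m j (graft j a c (del a) F').
Proof.
move=> j_l aL c_a fibF'; have [del_a S_del_a] := degL aL.
have [sizeF' permF' validF'] : forest_on (l.-1 + del a) (rem a L) F'.
  by move: fibF'; rewrite /root_fiber; case: (a == m) => [|[t _ []]].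
have jd_F' : j + del a <= size F' by rewrite sizeF'; lia.
set cs := take (del a) (drop j F').
have size_cs : size cs = del a by rewrite size_takel // size_drop; lia.
have m_cs : a != m -> m \in flabels cs.
  move=> am; move: fibF'; rewrite /root_fiber (negbTE am).
  case=> t; rewrite mem_index_iota => /andP [jt td] [_ m_t].
  apply/flabels_nthP; exists (t - j); first by rewrite size_cs; lia.
  by rewrite nth_take ?nth_drop ?subnKC //; lia.
split; first split.
- by rewrite size_graft // sizeF'; lia.
- apply: perm_trans (perm_flabels_graft _ _ _ _ _) _.
  by rewrite perm_sym (perm_trans (perm_to_rem aL)) // perm_cons perm_sym.
- rewrite all_tvalid_graft validF' size_cs S_del_a ?eqxx // del_a andbT /=.
  move: c_a; rewrite mem_root_colors; case: c => p /=; first by rewrite andbT.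
  case/and3P => am -> ->.
  rewrite !andbT; apply/negP => /allP a_min.
  by have := a_min m (m_cs am); have := m_min aL; move: am; lia.
- rewrite nth_graft /=; last lia.
  by rewrite inE; case: eqVneq => //= ma; apply: m_cs; rewrite eq_sym.
Qed.

End RootDecomposition.

Definition nleaves L l := l + \sum_(x <- L) (del x).-1.

Definition rising R n := \prod_(1 <= i < n) (R + i * (1 + k)).

Definition forest_count L l := (\prod_(x <- L) del x) * rising (nleaves L l) (size L).

Definition fiber_count L l m a :=
  if a == m then
    if rem a L is [::] then 1 else (l.-1 + del a) * forest_count (rem a L) (l.-1 + del a)
  else del a * forest_count (rem a L) (l.-1 + del a).

Lemma nleaves_rem L l a :
  a \in L -> 0 < l -> 0 < del a -> nleaves (rem a L) (l.-1 + del a) = nleaves L l.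
Proof.
by move=> aL l_gt0 del_a; rewrite /nleaves (perm_big _ (perm_to_rem aL)) big_cons /=; lia.
Qed.

(* The root of the tree containing [m] has weight [l.-1 + del m] if it is [m]
   itself, and [del a + k] (normal plus special colors) otherwise. *)
Lemma sum_root_weights L l m :
  uniq L -> m \in L -> {in L, forall x, 0 < del x} -> 0 < l ->
  \sum_(a <- L) (if a == m then l.-1 + del a else del a + k) =
  nleaves L l + (size L).-1 * (1 + k).
Proof.
move=> uL mL del_gt0 l_gt0.
rewrite (eq_big_seq (fun a => (del a).-1 + (if a == m then l else 1 + k))); last first.
  by move=> a /del_gt0; case: (a == m); lia.
have const_part : \sum_(a <- L) (if a == m then l else 1 + k) = l + (size L).-1 * (1 + k).
  rewrite (bigD1_seq m) //= eqxx (eq_bigr (fun => 1 + k)) => [|a /negbTE -> //].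
  by rewrite big_const_seq iter_addn_0 -size_filter -rem_filter // size_rem // mulnC.
by rewrite big_split /= const_part /nleaves addnCA addnA.
Qed.

Lemma forest_count_rec L l m :
  uniq L -> m \in L -> {in L, forall x, 0 < del x} -> 0 < l ->
  forest_count L l = \sum_(a <- L) size (root_colors m a) * fiber_count L l m a.
Proof.
move=> uL mL del_gt0 l_gt0.
case sizeL : (size L) => [|[|n]]; first by case: L mL sizeL {uL del_gt0}.
  case: L mL sizeL {uL del_gt0} => [|x [|//]] //; rewrite inE => /eqP <- _.
  rewrite big_seq1 size_root_colors /fiber_count /= eqxx /forest_count big_seq1.
  by rewrite /rising big_geq ?addn0.
set P := \prod_(x <- L) del x; set R := nleaves L l.
rewrite (eq_big_seq (fun a => P * rising R n.+1 *
           (if a == m then l.-1 + del a else del a + k))); last first.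
  move=> a aL; have sizeLa : size (rem a L) = n.+1 by rewrite size_rem // sizeL.
  rewrite size_root_colors /fiber_count /forest_count nleaves_rem ?del_gt0 // sizeLa.
  rewrite /P (perm_big _ (perm_to_rem aL)) big_cons /=.
  case: (rem a L) sizeLa => [//|y ys] _ /=; rewrite -/R.
  by move: (\prod_(x <- y :: ys) del x) (rising R n.+1) => p q; case: (a == m); nia.
rewrite -(big_distrr (P * rising R n.+1)) /= sum_root_weights // sizeL /forest_count sizeL.
by rewrite /rising big_nat_recr //= mulnA.
Qed.

Lemma forest_on_nil l F : forest_on l [::] F <-> F = nseq l Leaf.
Proof.
split=> [[sizeF /perm_nilP /flabels_nseq_Leaf -> _] | ->]; first by rewrite sizeF.
by split; rewrite ?size_nseq //; elim: l.
Qed.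

Lemma forest_on_tree_of l L m F :
  m \in L -> forest_on l L F <-> exists2 t, t \in index_iota 0 l & forest_on_at l L m t F.
Proof.
move=> mL; split=> [[sizeF permF validF] | [t _ []] //].
have /flabels_nthP [t t_F m_t] : m \in flabels F by rewrite (perm_mem permF).
by exists t; rewrite ?mem_index_iota -?sizeF.
Qed.

Lemma card_forest_on_within l L m lo hi N :
  uniq L -> hi <= l -> (forall t, t < l -> card_eq (forest_on_at l L m t) N) ->
  card_eq (fun F => exists2 t, t \in index_iota lo hi & forest_on_at l L m t F) ((hi - lo) * N).
Proof.
move=> uL hi_l cardN; rewrite -sum_nat_const_nat; apply: card_eq_bigcup.
- exact: iota_uniq.
- move=> t t' F; rewrite !mem_index_iota => /andP [_ t_hi] /andP [_ t'_hi].
  move=> [[sizeF permF _] m_t] [_ m_t'].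
  by apply: (flabels_nth_uniq _ _ _ m_t m_t'); rewrite ?(perm_uniq permF) ?sizeF //; lia.
- by move=> t; rewrite mem_index_iota => /andP [_ t_hi]; apply: cardN; lia.
Qed.

Lemma card_forest_on_at_of_fibers l L m j :
  uniq L -> label_degree L -> m \in L -> (forall x, x \in L -> m <= x) -> j < l ->
  (forall a, a \in L -> card_eq (root_fiber l L m j a) (fiber_count L l m a)) ->
  card_eq (forest_on_at l L m j) (forest_count L l).
Proof.
move=> uL degL mL m_min j_l card_fiber.
have del_gt0 : {in L, forall x, 0 < del x} by move=> x /degL [].
have graft_root a c F' : root_fiber l L m j a F' ->
    nth Leaf (graft j a c (del a) F') j = Node a c (take (del a) (drop j F')).
  by move=> /size_root_fiber sizeF'; rewrite nth_graft // sizeF'; lia.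
rewrite (forest_count_rec uL mL del_gt0) ?(leq_ltn_trans _ j_l) //.
apply: card_eq_ext (card_eq_bigcup (P := fun a F => exists2 c, c \in root_colors m a &
    exists2 F', root_fiber l L m j a F' & F = graft j a c (del a) F') uL _ _).
- move=> F; split=> [[a aL [c c_a [F' fibF' ->]]] | /(forest_on_at_ungraft degL mL m_min j_l)].
    exact: graft_forest_on_at.
  by case=> a aL hasF; exists a.
- move=> a a' F _ _ [c _ [F' fibF' ->]] [c' _ [F'' fibF'' /(congr1 (nth Leaf ^~ j))]].
  by rewrite !graft_root // => -[].
move=> a aL; rewrite -[_ * _]mulnC -iter_addn_0 -count_predT -big_const_seq.
apply: card_eq_bigcup; first exact: uniq_root_colors.
  move=> c c' F _ _ [F' fibF' ->] [F'' fibF'' /(congr1 (nth Leaf ^~ j))].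
  by rewrite !graft_root // => -[].
move=> c _; apply: card_eq_inj_image (card_fiber a aL) => F' F'' fibF' fibF''.
by apply: graft_inj; rewrite ?(size_root_fiber fibF') ?(size_root_fiber fibF''); lia.
Qed.

Theorem card_forest_on_at L m l j :
  uniq L -> label_degree L -> m \in L -> (forall x, x \in L -> m <= x) -> j < l ->
  card_eq (forest_on_at l L m j) (forest_count L l).
Proof.
have [n] := ubnP (size L); elim: n => // n IHn in L m l j *.
rewrite ltnS => size_L uL degL mL m_min j_l.
apply: card_forest_on_at_of_fibers => // a aL.
have [uLa degLa] : uniq (rem a L) /\ label_degree (rem a L).
  by split; [exact: rem_uniq | move=> x /mem_rem; exact: degL].
have sizeLa : size (rem a L) < size L.
  by rewrite size_rem // prednK // lt0n size_eq0; apply: contraTneq _ aL => ->.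
have [del_a _] := degL _ aL.
rewrite /root_fiber /fiber_count; case: eqVneq => [am | am].
  case La : (rem a L) => [|y ys].
    by apply: (card_eq1 (a := nseq (l.-1 + del a) Leaf)) => F; exact: forest_on_nil.
  rewrite -La; have ex_La : exists x, x \in rem a L by exists y; rewrite La mem_head.
  case: (ex_minnP ex_La) => m' m'La m'_min.
  apply: card_eq_ext (fun F => iff_sym (forest_on_tree_of _ _ m'La)) _.
  rewrite -[l.-1 + del a in X in X * _]subn0.
  apply: card_forest_on_within => // t t_l.
  by apply: IHn => //; lia.
have mLa : m \in rem a L by rewrite (mem_rem_uniq _ uL) inE mL andbT eq_sym.
rewrite -[del a in X in X * _](addKn j).
apply: card_forest_on_within => [//|//|t t_l]; first lia.
by apply: IHn => // [|x /mem_rem]; [lia | exact: m_min].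
Qed.

End Forests.

Section DegreeSets.

Variables (r : seq nat) (S : nat -> pred nat).
Hypothesis SV : in_V r S.

(* The [d >= 1] with [x \in S d]; junk value [0] for labels outside [1..n]. *)
Definition degree_of x : nat := nth 0 [seq d <- index_iota 1 (size r) | S d x] 0.

Lemma in_V_lt_size d x : 0 < d -> S d x -> d < size r.
Proof.
case: SV => _ S_range S_card d_gt0 S_dx; move: (S_card d d_gt0); rewrite /rr.
case: ltnP => // r_d; rewrite nth_default // => /eqP; apply: contraTT => _.
rewrite -lt0n -has_count; apply/hasP; exists x => //.
by rewrite mem_iota; have /S_range : exists2 i, 1 <= i & S i x by exists d.
Qed.

Lemma degree_ofP x :
  x \in iota 1 (nint r) ->
  degree_of x \in index_iota 1 (size r) /\ forall d, 0 < d -> S d x = (d == degree_of x).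
Proof.
case: SV => S_disj S_range _; rewrite mem_iota => x_n.
have [d d_gt0 S_dx] : exists2 d, 1 <= d & S d x by apply/S_range; lia.
have /(mem_nth 0) : 0 < size [seq d <- index_iota 1 (size r) | S d x].
  rewrite -has_predT; apply/hasP; exists d => //.
  by rewrite mem_filter S_dx mem_index_iota d_gt0 (in_V_lt_size d_gt0 S_dx).
rewrite -/(degree_of x) mem_filter => /andP [S_deg deg_r]; split=> // i i_gt0.
apply/idP/eqP => [S_ix | -> //]; apply/eqP; apply: contraT => i_deg.
by case: (S_disj i (degree_of x) x) => //; move: deg_r; rewrite mem_index_iota => /andP [].
Qed.

Lemma label_degree_in_V : label_degree S degree_of (iota 1 (nint r)).
Proof.
move=> x /degree_ofP [deg_r S_deg]; split=> //.
by move: deg_r; rewrite mem_index_iota => /andP [].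
Qed.

Lemma count_degree_of d :
  0 < d -> count (fun x => degree_of x == d) (iota 1 (nint r)) = rr r d.
Proof.
case: SV => _ _ S_card d_gt0; rewrite -S_card //.
by apply: eq_in_count => x /degree_ofP [_ S_deg]; rewrite /= S_deg // eq_sym.
Qed.

Let degree_of_in x : x \in iota 1 (nint r) -> degree_of x \in index_iota 1 (size r).
Proof. by case/degree_ofP. Qed.

Let uniq_degrees : uniq (index_iota 1 (size r)). Proof. exact: iota_uniq. Qed.

Lemma prod_degree_of :
  \prod_(x <- iota 1 (nint r)) degree_of x = \prod_(1 <= d < size r) d ^ rr r d.
Proof.
rewrite (big_seq_fibers _ id uniq_degrees degree_of_in).
apply: eq_big_seq => d; rewrite mem_index_iota => /andP [d_gt0 _].
by rewrite big_const_seq iter_muln_1 count_degree_of.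
Qed.

Lemma sum_degree_of :
  \sum_(x <- iota 1 (nint r)) degree_of x = \sum_(1 <= d < size r) d * rr r d.
Proof.
rewrite (big_seq_fibers _ id uniq_degrees degree_of_in).
apply: eq_big_seq => d; rewrite mem_index_iota => /andP [d_gt0 _].
by rewrite big_const_seq iter_addn_0 count_degree_of.
Qed.

Lemma count_fdegs_in_V k F d :
  perm_eq (flabels F) (iota 1 (nint r)) -> all (tvalid k S) F -> 0 < d ->
  count_mem d (fdegs F) = rr r d.
Proof.
move=> permF validF d_gt0; rewrite -count_degree_of // -(permP permF).
by apply: (count_fdegs d_gt0 _ validF) => x; rewrite (perm_mem permF); apply: label_degree_in_V.
Qed.

Section Balanced.

Variable l : nat.
Hypotheses (r_gt0 : 0 < size r)
  (balance_r : l + \sum_(d < size r) d * rr r d = \sum_(d < size r) rr r d).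

Lemma count_leaves_size F :
  (forall d, 0 < d -> count_mem d (fdegs F) = rr r d) ->
  count_mem 0 (fdegs F) = rr r 0 <-> size F = l.
Proof.
move=> cnt.
have fdegs_r : all (fun d => d < size r) (fdegs F).
  apply/allP => -[//|d] d_F; have : 0 < count_mem d.+1 (fdegs F).
    by rewrite -has_count has_pred1.
  by rewrite cnt // /rr; case: (ltnP d.+1 (size r)) => // r_d; rewrite nth_default.
have := sum_count_fdegs fdegs_r; move: balance_r.
have cnt_sum (G : nat -> nat -> nat) :
    \sum_(1 <= d < size r) G d (count_mem d (fdegs F)) = \sum_(1 <= d < size r) G d (rr r d).
  by apply: eq_big_nat => d /andP [d_gt0 _]; rewrite cnt.
rewrite -(big_mkord xpredT (rr r)) -(big_mkord xpredT (fun d => d * rr r d)) !(big_ltn r_gt0).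
rewrite (cnt_sum (fun _ c => c)) (cnt_sum muln) /nint; lia.
Qed.

Lemma in_CF_forest_on k F :
  in_CF r k S F <-> forest_on k S l (iota 1 (nint r)) F.
Proof.
split=> [[cnt permF validF] | [sizeF permF validF]].
  by split=> //; apply/count_leaves_size => // d; apply: count_fdegs_in_V permF validF.
split=> // -[|d]; last exact: count_fdegs_in_V permF validF _.
by apply/count_leaves_size => // d; apply: count_fdegs_in_V permF validF.
Qed.

Lemma in_CF1_forest_on_at k F :
  in_CF1 r k S F <-> forest_on_at k S l (iota 1 (nint r)) 1 0 F.
Proof.
by rewrite /in_CF1 /forest_on_at in_CF_forest_on; case: F => [|t F] /=; split=> -[].
Qed.

Lemma forest_count_in_V k :
  forest_count k degree_of (iota 1 (nint r)) l =
  (\prod_(1 <= d < size r) d ^ rr r d) * rising k (rr r 0) (nint r).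
Proof.
rewrite /forest_count prod_degree_of size_iota; congr (_ * rising _ _ _).
have pred_sum : \sum_(x <- iota 1 (nint r)) (degree_of x).-1 + nint r =
                \sum_(1 <= d < size r) d * rr r d.
  rewrite -sum_degree_of -[X in _ + X](size_iota 1) -sum1_size -big_split.
  by apply: eq_big_seq => x /label_degree_in_V [deg_gt0 _]; rewrite /= addn1 prednK.
move: balance_r pred_sum.
rewrite -(big_mkord xpredT (rr r)) -(big_mkord xpredT (fun d => d * rr r d)) !(big_ltn r_gt0).
by rewrite /nleaves /nint; lia.
Qed.

End Balanced.

End DegreeSets.

Theorem mainTheorem7 (r : seq nat) (k : nat) (S : nat -> pred nat) :
  1 <= nint r ->
  (\sum_(d < size r) d * rr r d).+1 <= \sum_(d < size r) rr r d ->
  in_V r S ->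
  has_card (in_CF1 r k S)
    ((\prod_(1 <= d < size r) d ^ rr r d) *
     \prod_(1 <= i < nint r) (rr r 0 + i * (1 + k))).
Proof.
move=> n_gt0 ell_gt0 SV.
set l := \sum_(d < size r) rr r d - \sum_(d < size r) d * rr r d.
have balance_r : l + \sum_(d < size r) d * rr r d = \sum_(d < size r) rr r d.
  exact: subnK (ltnW ell_gt0).
have r_gt0 : 0 < size r by move: n_gt0; rewrite /nint; case: (size r) => //; rewrite big_geq.
rewrite -(forest_count_in_V SV r_gt0 balance_r k).
apply: card_eq_ext (fun F => iff_sym (in_CF1_forest_on_at SV r_gt0 balance_r k F)) _.
apply: card_forest_on_at.
- exact: iota_uniq.
- exact: label_degree_in_V.
- by rewrite mem_iota leqnn.
- by move=> x; rewrite mem_iota => /andP [].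
- by rewrite subn_gt0.
Qed.
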